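(* There is an absolute constant $c > 0$ such that for every integer $n > 1$ there exist a set $P$ of $n$ points in the Euclidean plane $\mathbb{R}^2$ and a set $\mathcal{L}$ of $n$ lines in $\mathbb{R}^2$ such that the incidence graph $G = (P \cup \mathcal{L}, I(P,\mathcal{L}))$ contains no cycle of length $10$ (as a subgraph) and \[ |I(P,\mathcal{L})| \geq c\, n^{1+1/15}. \]
   Context: For a finite set $P$ of points and a finite set $\mathcal{L}$ of lines in the plane, $I(P,\mathcal{L}) = \{(p,\ell) \in P \times \mathcal{L} : p \in \ell\}$ is the set of incidences. The incidence graph of $(P,\mathcal{L})$ is the bipartite graph with vertex classes $P$ and $\mathcal{L}$ whose edge set is $I(P,\mathcal{L})$, i.e. $p \in P$ is adjacent to $\ell \in \mathcal{L}$ iff $p \in \ell$. A graph is $C_{10}$-free if it has no subgraph isomorphic to the cycle of length $10$. *)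

From Stdlib Require Import Reals Arith.
Open Scope R_scope.

Definition point : Type := (R * R)%type.

(* A line is given by an equation a x + b y = c with (a,b) <> (0,0). *)
Record line := mkLine { la : R; lb : R; lc : R }.

Definition is_line (l : line) : Prop := la l <> 0 \/ lb l <> 0.

Definition on_line (p : point) (l : line) : Prop :=
  la l * fst p + lb l * snd p = lc l.

Definition same_line (l1 l2 : line) : Prop :=
  forall p : point, on_line p l1 <-> on_line p l2.

Definition on_lineb (p : point) (l : line) : bool :=
  if Req_EM_T (la l * fst p + lb l * snd p) (lc l) then true else false.

Fixpoint sum_nat (n : nat) (f : nat -> nat) : nat :=
  match n with
  | O => O
  | S k => (sum_nat k f + f k)%nat
  end.

(* |I(P,L)| for P = {P 0,...,P (n-1)}, L = {L 0,...,L (n-1)}. *)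
Definition num_incidences (n : nat) (P : nat -> point) (L : nat -> line) : nat :=
  sum_nat n (fun i => sum_nat n (fun j => if on_lineb (P i) (L j) then 1%nat else 0%nat)).

(* Incidence graph: vertices inl i (point P i) and inr j (line L j), i,j < n;
   p adjacent to l iff p lies on l. *)
Definition inc_adj (n : nat) (P : nat -> point) (L : nat -> line)
    (u v : nat + nat) : Prop :=
  match u, v with
  | inl i, inr j | inr j, inl i => (i < n)%nat /\ (j < n)%nat /\ on_line (P i) (L j)
  | _, _ => False
  end.

Definition has_cycle {V : Type} (adj : V -> V -> Prop) (k : nat) : Prop :=
  exists f : nat -> V,
    (forall i j, (i < k)%nat -> (j < k)%nat -> f i = f j -> i = j) /\
    (forall i, (i < k)%nat -> adj (f i) (f (Nat.modulo (S i) k))).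

Definition C10_free {V : Type} (adj : V -> V -> Prop) : Prop := ~ has_cycle adj 10.

(* A 10-cycle in the incidence graph is a closed chain p0 l0 p1 l1 ... p4 l4 with p_k, p_(k+1)
   on l_k.  We take the d x 2W grid of points (x, y) and the lines y = s(a) x + b, 0 <= a < d,
   0 <= b < W, where s(a) = a + B1 a^2 + B1 B2 a^3 + B1 B2 B3 a^4 and B_m = 5 d^(m+1).  Along a
   chain, t_k = x_(k+1) - x_k satisfies sum t_k = 0 and sum t_k s(a_k) = 0 with 0 < |t_k| < d;
   as |sum t_k a_k^m| < B_m, the second relation splits digit by digit into sum t_k a_k^m = 0
   for m <= 4.  By Vandermonde each slope index a_k then occurs at least twice, impossible for
   five values around a cycle in which consecutive ones differ.  Every line meets d grid points,
   and with d ~ n^(1/15), W ~ n/d this gives about d n / 4 incidences. *)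

From Stdlib Require Import Reals Arith Lia ZArith Lra List.
Import ListNotations.

Open Scope Z_scope.

Definition sum5 (f : nat -> Z) : Z := f 0%nat + f 1%nat + f 2%nat + f 3%nat + f 4%nat.

Definition moment (t a : nat -> Z) (m : Z) : Z := sum5 (fun k => t k * a k ^ m).

Lemma moments_annihilate_quartic t a b1 b2 b3 b4 :
  (forall m, 0 <= m <= 4 -> moment t a m = 0) ->
  sum5 (fun k => t k * ((a k - b1) * (a k - b2) * (a k - b3) * (a k - b4))) = 0.
Proof.
  intros M.
  transitivity (moment t a 4 - (b1 + b2 + b3 + b4) * moment t a 3
    + (b1*b2 + b1*b3 + b1*b4 + b2*b3 + b2*b4 + b3*b4) * moment t a 2
    - (b1*b2*b3 + b1*b2*b4 + b1*b3*b4 + b2*b3*b4) * moment t a 1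
    + b1*b2*b3*b4 * moment t a 0).
  - unfold moment, sum5; ring.
  - rewrite !M by lia; ring.
Qed.

Lemma moments_vanish_value_repeats t a k :
  (forall m, 0 <= m <= 4 -> moment t a m = 0) -> (k < 5)%nat -> t k <> 0 ->
  exists j, (j < 5)%nat /\ j <> k /\ a j = a k.
Proof.
  intros M Hk Ht.
  (* The quartic vanishing at the other four values kills every term but the k-th. *)
  pose proof (moments_annihilate_quartic t a (a ((k + 1) mod 5)%nat) (a ((k + 2) mod 5)%nat)
    (a ((k + 3) mod 5)%nat) (a ((k + 4) mod 5)%nat) M) as Q.
  unfold sum5 in Q.
  destruct k as [|[|[|[|[|k]]]]]; try lia; simpl in Q;
    rewrite ?Z.sub_diag, ?Z.mul_0_l, ?Z.mul_0_r, ?Z.add_0_l, ?Z.add_0_r in Q;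
    repeat (apply Z.mul_eq_0 in Q; destruct Q as [Q|Q]); try contradiction;
    match type of Q with a ?i - a ?j = 0 => exists j; repeat split; lia end.
Qed.

Lemma cycle5_not_all_values_repeated (a : nat -> Z) :
  (forall k, (k < 5)%nat -> a k <> a (S k mod 5)%nat) ->
  ~ (forall k, (k < 5)%nat -> exists j, (j < 5)%nat /\ j <> k /\ a j = a k).
Proof.
  intros Adj Rep.
  assert (R : forall k, (k < 5)%nat ->
                a k = a ((k + 2) mod 5)%nat \/ a k = a ((k + 3) mod 5)%nat).
  { intros k Hk. destruct (Rep k Hk) as (j & Hj & Hjk & E).
    pose proof (Adj k Hk).
    pose proof (Adj ((k + 4) mod 5)%nat ltac:(apply Nat.mod_upper_bound; lia)).
    destruct k as [|[|[|[|[|k]]]]]; [..|lia]; destruct j as [|[|[|[|[|j]]]]]; try lia;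
      simpl in *; first [left; congruence | right; congruence | exfalso; congruence]. }
  pose proof (Adj 0%nat ltac:(lia)); pose proof (Adj 1%nat ltac:(lia));
  pose proof (Adj 2%nat ltac:(lia)); pose proof (Adj 3%nat ltac:(lia));
  pose proof (Adj 4%nat ltac:(lia)); simpl in *.
  destruct (R 0%nat ltac:(lia)), (R 1%nat ltac:(lia)), (R 2%nat ltac:(lia)),
    (R 3%nat ltac:(lia)), (R 4%nat ltac:(lia)); simpl in *; congruence.
Qed.

Lemma add_mul_eq0_small u B X : Z.abs u < B -> u + B * X = 0 -> u = 0 /\ X = 0.
Proof.
  intros Hu E.
  destruct (Z.eq_dec X 0) as [->|HX]; [lia|].
  assert (Z.abs (B * X) >= B) by (rewrite Z.abs_mul; nia).
  lia.
Qed.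

Lemma abs_mul_pow_lt d u v m :
  0 <= m -> Z.abs u < d -> 0 <= v < d -> Z.abs (u * v ^ m) < d ^ (m + 1).
Proof.
  intros Hm Hu Hv.
  rewrite Z.abs_mul, Z.abs_pow, (Z.abs_eq v) by lia.
  rewrite Z.pow_add_r, Z.pow_1_r by lia.
  assert (v ^ m <= d ^ m) by (apply Z.pow_le_mono_l; lia).
  assert (0 < d ^ m) by (apply Z.pow_pos_nonneg; lia).
  assert (0 <= v ^ m) by (apply Z.pow_nonneg; lia).
  nia.
Qed.

Lemma abs_sum5_le f : Z.abs (sum5 f) <= sum5 (fun k => Z.abs (f k)).
Proof.
  unfold sum5.
  repeat (etransitivity; [apply Z.abs_triangle|]; apply Z.add_le_mono_r).
  reflexivity.
Qed.

Lemma sum5_lt f D : (forall k, (k < 5)%nat -> f k < D) -> sum5 f < 5 * D.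
Proof.
  intros H. unfold sum5.
  pose proof (H 0%nat ltac:(lia)); pose proof (H 1%nat ltac:(lia));
  pose proof (H 2%nat ltac:(lia)); pose proof (H 3%nat ltac:(lia));
  pose proof (H 4%nat ltac:(lia)).
  lia.
Qed.

Lemma moment_abs_lt d t a m : 0 <= m ->
  (forall k, (k < 5)%nat -> Z.abs (t k) < d /\ 0 <= a k < d) ->
  Z.abs (moment t a m) < 5 * d ^ (m + 1).
Proof.
  intros Hm B.
  eapply Z.le_lt_trans; [apply abs_sum5_le|].
  apply sum5_lt. intros k Hk. destruct (B k Hk). apply abs_mul_pow_lt; auto.
Qed.

Definition slopeZ (d a : Z) : Z :=
  a + 5 * d ^ 2 * (a ^ 2 + 5 * d ^ 3 * (a ^ 3 + 5 * d ^ 4 * a ^ 4)).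

Lemma slope_moments_vanish d t a :
  (forall k, (k < 5)%nat -> Z.abs (t k) < d /\ 0 <= a k < d) ->
  sum5 t = 0 -> sum5 (fun k => t k * slopeZ d (a k)) = 0 ->
  forall m, 0 <= m <= 4 -> moment t a m = 0.
Proof.
  intros B S0 S.
  assert (E : moment t a 1 + 5 * d ^ 2 * (moment t a 2 + 5 * d ^ 3 *
                (moment t a 3 + 5 * d ^ 4 * moment t a 4)) = 0)
    by (rewrite <- S; unfold moment, sum5, slopeZ; ring).
  apply add_mul_eq0_small in E as [E1 E]; [|apply (moment_abs_lt d); auto; lia].
  apply add_mul_eq0_small in E as [E2 E]; [|apply (moment_abs_lt d); auto; lia].
  apply add_mul_eq0_small in E as [E3 E4]; [|apply (moment_abs_lt d); auto; lia].
  assert (E0 : moment t a 0 = sum5 t) by (unfold moment, sum5; ring).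
  rewrite S0 in E0.
  intros m Hm.
  assert (m = 0 \/ m = 1 \/ m = 2 \/ m = 3 \/ m = 4) as [->|[->|[->|[->| ->]]]] by lia;
    assumption.
Qed.

Lemma no_slope_pentagon d (x y a b : nat -> Z) :
  (forall k, (k < 5)%nat -> 0 <= x k < d /\ 0 <= a k < d) ->
  (forall k, (k < 5)%nat -> y k = b k + slopeZ d (a k) * x k /\
                          y (S k mod 5)%nat = b k + slopeZ d (a k) * x (S k mod 5)%nat) ->
  (forall k, (k < 5)%nat -> (x k, y k) <> (x (S k mod 5)%nat, y (S k mod 5)%nat) /\
                          (a k, b k) <> (a (S k mod 5)%nat, b (S k mod 5)%nat)) ->
  False.
Proof.
  intros B I D.
  set (t k := x (S k mod 5)%nat - x k).
  assert (St : sum5 t = 0) by (unfold sum5, t; simpl; ring).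
  assert (Ts : forall k, (k < 5)%nat -> t k * slopeZ d (a k) = y (S k mod 5)%nat - y k).
  { intros k Hk. destruct (I k Hk) as [-> ->]. unfold t. ring. }
  assert (Sts : sum5 (fun k => t k * slopeZ d (a k)) = 0).
  { unfold sum5. rewrite !Ts by lia. simpl. ring. }
  assert (Tnz : forall k, (k < 5)%nat -> t k <> 0).
  { intros k Hk Ht. destruct (D k Hk) as [Dp _]. destruct (I k Hk) as [Ik Ik'].
    apply Dp. unfold t in Ht. f_equal; [|rewrite Ik, Ik']; lia. }
  assert (Adj : forall k, (k < 5)%nat -> a k <> a (S k mod 5)%nat).
  { intros k Hk Ha. destruct (D k Hk) as [_ Dl].
    assert (Hk' : (S k mod 5 < 5)%nat) by (apply Nat.mod_upper_bound; lia).
    destruct (I k Hk) as [_ Ik], (I _ Hk') as [Ik' _].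
    apply Dl. rewrite Ha in Ik |- *. f_equal. lia. }
  apply (cycle5_not_all_values_repeated a Adj).
  intros k Hk. apply (moments_vanish_value_repeats t); auto.
  apply (slope_moments_vanish d); auto.
  intros j Hj. destruct (B j Hj) as [Bx Ba]. split; [unfold t|]; auto.
  assert (Hj' : (S j mod 5 < 5)%nat) by (apply Nat.mod_upper_bound; lia).
  destruct (B _ Hj'). lia.
Qed.

Close Scope Z_scope.
Open Scope nat_scope.

Definition slope (d a : nat) : nat :=
  a + 5 * d ^ 2 * (a ^ 2 + 5 * d ^ 3 * (a ^ 3 + 5 * d ^ 4 * a ^ 4)).

Lemma Nat2Z_slope d a : Z.of_nat (slope d a) = slopeZ (Z.of_nat d) (Z.of_nat a).
Proof.
  unfold slope, slopeZ.
  repeat rewrite ?Nat2Z.inj_add, ?Nat2Z.inj_mul, ?Nat2Z.inj_pow.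
  reflexivity.
Qed.

Lemma slope_le_mono d a a' : a <= a' -> slope d a <= slope d a'.
Proof.
  intros H. unfold slope.
  repeat (apply Nat.add_le_mono || apply Nat.mul_le_mono_l || apply Nat.pow_le_mono_l);
    assumption.
Qed.

Lemma slope_lt_mono d a a' : a < a' -> slope d a < slope d a'.
Proof.
  intros H. unfold slope.
  apply Nat.add_lt_le_mono; [assumption|].
  repeat (apply Nat.add_le_mono || apply Nat.mul_le_mono_l || apply Nat.pow_le_mono_l); lia.
Qed.

Lemma slope_inj d a a' : slope d a = slope d a' -> a = a'.
Proof.
  intros E. destruct (Nat.lt_trichotomy a a') as [H|[H|H]]; auto;
    apply (slope_lt_mono d) in H; lia.
Qed.

Lemma div_mod_inj d i j : i mod d = j mod d -> i / d = j / d -> i = j.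
Proof. intros Hm Hd. rewrite (Nat.div_mod_eq i d), (Nat.div_mod_eq j d). lia. Qed.

Lemma sum_nat_ext n (f g : nat -> nat) :
  (forall i, i < n -> f i = g i) -> sum_nat n f = sum_nat n g.
Proof.
  induction n; simpl; intros H; [reflexivity|].
  rewrite IHn, H; [reflexivity | lia | intros; apply H; lia].
Qed.

Lemma sum_nat_add n (f g : nat -> nat) :
  sum_nat n (fun i => f i + g i) = sum_nat n f + sum_nat n g.
Proof. induction n; simpl; [reflexivity|]. rewrite IHn. lia. Qed.

Lemma sum_nat_swap n m (h : nat -> nat -> nat) :
  sum_nat n (fun i => sum_nat m (h i)) = sum_nat m (fun j => sum_nat n (fun i => h i j)).
Proof.
  induction n; simpl.
  - induction m; simpl; [reflexivity|]. rewrite <- IHm. reflexivity.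
  - rewrite IHn, <- sum_nat_add. reflexivity.
Qed.

Lemma sum_nat_le_mono n m (f : nat -> nat) : n <= m -> sum_nat n f <= sum_nat m f.
Proof. induction 1; simpl; lia. Qed.

Lemma sum_nat_ge_const n c (f : nat -> nat) :
  (forall i, i < n -> c <= f i) -> n * c <= sum_nat n f.
Proof.
  induction n; simpl; intros H; [lia|].
  specialize (H n ltac:(lia)) as Hn. specialize (IHn ltac:(intros; apply H; lia)). lia.
Qed.

Lemma sum_nat_ge_term n (f : nat -> nat) i : i < n -> f i <= sum_nat n f.
Proof.
  induction n; simpl; intros Hi; [lia|].
  destruct (Nat.eq_dec i n) as [->|Hne]; [lia|]. specialize (IHn ltac:(lia)). lia.
Qed.

Lemma sum_nat_add_range a b (f : nat -> nat) :
  sum_nat (a + b) f = sum_nat a f + sum_nat b (fun i => f (a + i)).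
Proof.
  induction b; simpl; [rewrite Nat.add_0_r; lia|].
  rewrite Nat.add_succ_r. simpl. rewrite IHb. lia.
Qed.

Lemma sum_nat_blocks d m (f : nat -> nat) :
  sum_nat (d * m) f = sum_nat m (fun y => sum_nat d (fun x => f (x + d * y))).
Proof.
  induction m; simpl; [rewrite Nat.mul_0_r; reflexivity|].
  rewrite Nat.mul_succ_r, sum_nat_add_range, IHm. f_equal.
  apply sum_nat_ext. intros x _. f_equal. lia.
Qed.

Open Scope R_scope.

(* Indices beyond the grid give points below the x-axis and vertical lines left of the
   y-axis; they carry no incidences. *)
Definition grid_point (d W i : nat) : point :=
  if (i <? d * (2 * W))%nat then (INR (i mod d), INR (i / d)) else (INR i, -1).

Definition grid_line (d W j : nat) : line :=
  if (j <? d * W)%nat then mkLine (- INR (slope d (j mod d))) 1 (INR (j / d))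
  else mkLine 1 0 (- (INR j + 1)).

Lemma grid_point_inj d W i j : grid_point d W i = grid_point d W j -> i = j.
Proof.
  unfold grid_point.
  destruct (Nat.ltb_spec i (d * (2 * W))), (Nat.ltb_spec j (d * (2 * W)));
    intro E; apply pair_equal_spec in E as [Ex Ey].
  - apply INR_eq in Ex, Ey. apply (div_mod_inj d); assumption.
  - pose proof (pos_INR (i / d)). lra.
  - pose proof (pos_INR (j / d)). lra.
  - apply INR_eq; assumption.
Qed.

Lemma grid_line_is_line d W j : is_line (grid_line d W j).
Proof. unfold grid_line, is_line. destruct (j <? d * W)%nat; simpl; lra. Qed.

Lemma on_lineb_true p l : on_line p l -> on_lineb p l = true.
Proof. unfold on_lineb, on_line. intros. destruct Req_EM_T; auto. Qed.

Lemma grid_line_inj d W i j : same_line (grid_line d W i) (grid_line d W j) -> i = j.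
Proof.
  unfold same_line, grid_line, on_line.
  destruct (Nat.ltb_spec i (d * W)), (Nat.ltb_spec j (d * W)); cbn [fst snd la lb lc];
    intro HS.
  - pose proof (proj1 (HS (0, INR (i / d))) ltac:(simpl; ring)) as E0. simpl in E0.
    pose proof (proj1 (HS (1, INR (slope d (i mod d)) + INR (i / d))) ltac:(simpl; ring)) as E1.
    simpl in E1.
    apply (div_mod_inj d); [apply (slope_inj d)|]; apply INR_eq; lra.
  - pose proof (proj1 (HS (0, INR (i / d))) ltac:(simpl; ring)) as E0. simpl in E0.
    pose proof (pos_INR j). lra.
  - pose proof (proj2 (HS (0, INR (j / d))) ltac:(simpl; ring)) as E0. simpl in E0.
    pose proof (pos_INR i). lra.
  - pose proof (proj1 (HS (- (INR i + 1), 0)) ltac:(simpl; ring)) as E0. simpl in E0.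
    apply INR_eq. lra.
Qed.

Lemma on_grid_line d W i j : on_line (grid_point d W i) (grid_line d W j) ->
  (i < d * (2 * W))%nat /\ (j < d * W)%nat /\ (i / d = j / d + slope d (j mod d) * (i mod d))%nat.
Proof.
  unfold grid_point, grid_line, on_line.
  destruct (Nat.ltb_spec i (d * (2 * W))), (Nat.ltb_spec j (d * W)); cbn [fst snd la lb lc];
    intro Hon.
  - repeat split; auto. apply INR_eq. rewrite plus_INR, mult_INR. lra.
  - pose proof (pos_INR (i mod d)); pose proof (pos_INR j). lra.
  - pose proof (pos_INR (j / d)).
    pose proof (Rmult_le_pos _ _ (pos_INR (slope d (j mod d))) (pos_INR i)). lra.
  - pose proof (pos_INR i); pose proof (pos_INR j). lra.
Qed.

Lemma on_grid_line_intro d W x y j : (x < d)%nat -> (x + d * y < d * (2 * W))%nat ->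
  (j < d * W)%nat -> y = (j / d + slope d (j mod d) * x)%nat ->
  on_line (grid_point d W (x + d * y)) (grid_line d W j).
Proof.
  intros Hx Hi Hj Hy. unfold grid_point, grid_line, on_line.
  destruct (Nat.ltb_spec (x + d * y) (d * (2 * W))); [|lia].
  destruct (Nat.ltb_spec j (d * W)); [|lia]. cbn [fst snd la lb lc].
  rewrite (Nat.mul_comm d y), Nat.div_add, Nat.Div0.mod_add by lia.
  rewrite (Nat.div_small x d), (Nat.mod_small x d) by lia.
  rewrite Nat.add_0_l, Hy, plus_INR, mult_INR. ring.
Qed.

Definition incidence_pentagon (P : nat -> point) (L : nat -> line) (p l : nat -> nat) : Prop :=
  forall k, (k < 5)%nat ->
    on_line (P (p k)) (L (l k)) /\ on_line (P (p (S k mod 5)%nat)) (L (l k)) /\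
    p k <> p (S k mod 5)%nat /\ l k <> l (S k mod 5)%nat.

Lemma C10_incidence_pentagon n P L :
  has_cycle (inc_adj n P L) 10 -> exists p l, incidence_pentagon P L p l.
Proof.
  intros [f [Hinj Hadj]].
  assert (D : forall i j, (i < 10)%nat -> (j < 10)%nat -> i <> j -> f i <> f j)
    by (intros i j Hi Hj Hij E; apply Hij, Hinj; assumption).
  pose proof (Hadj 0%nat ltac:(lia)) as H0; pose proof (Hadj 1%nat ltac:(lia)) as H1;
  pose proof (Hadj 2%nat ltac:(lia)) as H2; pose proof (Hadj 3%nat ltac:(lia)) as H3;
  pose proof (Hadj 4%nat ltac:(lia)) as H4; pose proof (Hadj 5%nat ltac:(lia)) as H5;
  pose proof (Hadj 6%nat ltac:(lia)) as H6; pose proof (Hadj 7%nat ltac:(lia)) as H7;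
  pose proof (Hadj 8%nat ltac:(lia)) as H8; pose proof (Hadj 9%nat ltac:(lia)) as H9.
  simpl in H0, H1, H2, H3, H4, H5, H6, H7, H8, H9.
  (* The cycle alternates between points and lines, starting with either. *)
  destruct (f 0%nat) as [v0|v0] eqn:E0; destruct (f 1%nat) as [v1|v1] eqn:E1;
    simpl in H0; try contradiction;
  destruct (f 2%nat) as [v2|v2] eqn:E2; simpl in H1; try contradiction;
  destruct (f 3%nat) as [v3|v3] eqn:E3; simpl in H2; try contradiction;
  destruct (f 4%nat) as [v4|v4] eqn:E4; simpl in H3; try contradiction;
  destruct (f 5%nat) as [v5|v5] eqn:E5; simpl in H4; try contradiction;
  destruct (f 6%nat) as [v6|v6] eqn:E6; simpl in H5; try contradiction;
  destruct (f 7%nat) as [v7|v7] eqn:E7; simpl in H6; try contradiction;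
  destruct (f 8%nat) as [v8|v8] eqn:E8; simpl in H7; try contradiction;
  destruct (f 9%nat) as [v9|v9] eqn:E9; simpl in H8; try contradiction; simpl in H9.
  - exists (fun k => nth k [v0; v2; v4; v6; v8] 0%nat),
      (fun k => nth k [v1; v3; v5; v7; v9] 0%nat).
    intros [|[|[|[|[|k]]]]] Hk; try lia; simpl; repeat split; try tauto; intro e; subst;
    match goal with
    | Ea : f ?i = ?u, Eb : f ?j = ?u |- _ => apply (D i j); [lia|lia|lia|congruence]
    end.
  - exists (fun k => nth k [v1; v3; v5; v7; v9] 0%nat),
      (fun k => nth k [v2; v4; v6; v8; v0] 0%nat).
    intros [|[|[|[|[|k]]]]] Hk; try lia; simpl; repeat split; try tauto; intro e; subst;
    match goal with
    | Ea : f ?i = ?u, Eb : f ?j = ?u |- _ => apply (D i j); [lia|lia|lia|congruence]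
    end.
Qed.

Lemma grid_C10_free d W n : C10_free (inc_adj n (grid_point d W) (grid_line d W)).
Proof.
  intros Hc. apply C10_incidence_pentagon in Hc as (p & l & Hpl).
  apply (no_slope_pentagon (Z.of_nat d)
    (fun k => Z.of_nat (p k mod d)) (fun k => Z.of_nat (p k / d))
    (fun k => Z.of_nat (l k mod d)) (fun k => Z.of_nat (l k / d)));
    intros k Hk; destruct (Hpl k Hk) as (I0 & I1 & Dp & Dl);
    apply on_grid_line in I0 as (_ & Hl & E0), I1 as (_ & _ & E1).
  - pose proof (Nat.mod_upper_bound (p k) d ltac:(lia)).
    pose proof (Nat.mod_upper_bound (l k) d ltac:(lia)). lia.
  - rewrite <- Nat2Z_slope. lia.
  - split; intro E; apply pair_equal_spec in E as [Ex Ey];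
      [apply Dp | apply Dl]; apply (div_mod_inj d); lia.
Qed.

Open Scope nat_scope.

Lemma grid_line_degree d W n j : d * slope d (d - 1) <= W -> d * (2 * W) <= n -> j < d * W ->
  d <= sum_nat n (fun i => if on_lineb (grid_point d W i) (grid_line d W j) then 1 else 0).
Proof.
  intros HW Hn Hj.
  eapply Nat.le_trans; [|apply sum_nat_le_mono, Hn].
  rewrite sum_nat_blocks, sum_nat_swap.
  rewrite <- (Nat.mul_1_r d) at 1.
  apply sum_nat_ge_const. intros x Hx.
  set (y := j / d + slope d (j mod d) * x).
  assert (Hy : y < 2 * W).
  { assert (j / d < W) by (apply Nat.Div0.div_lt_upper_bound; lia).
    assert (slope d (j mod d) <= slope d (d - 1)).
    { apply slope_le_mono. pose proof (Nat.mod_upper_bound j d ltac:(lia)). lia. }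
    assert (slope d (j mod d) * x <= slope d (d - 1) * d) by (apply Nat.mul_le_mono; lia).
    unfold y. lia. }
  eapply Nat.le_trans; [|apply (sum_nat_ge_term _ _ y Hy)].
  cbv beta. rewrite on_lineb_true; [reflexivity|].
  apply on_grid_line_intro; auto; nia.
Qed.

Lemma grid_incidences_ge d W n : d * slope d (d - 1) <= W -> d * (2 * W) <= n ->
  d * (d * W) <= num_incidences n (grid_point d W) (grid_line d W).
Proof.
  intros HW Hn. unfold num_incidences. rewrite sum_nat_swap.
  eapply Nat.le_trans; [|apply sum_nat_le_mono with (n := d * W); nia].
  rewrite Nat.mul_comm. apply sum_nat_ge_const. intros j Hj.
  apply grid_line_degree; assumption.
Qed.

Lemma bool_switch_point (Q : nat -> bool) N :
  Q 1 = true -> Q (S N) = false -> exists d, 1 <= d /\ Q d = true /\ Q (S d) = false.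
Proof.
  induction N; intros H1 HN; [congruence|].
  destruct (Q (S N)) eqn:E; [exists (S N); auto with arith | auto].
Qed.

Lemma slope_diag_le e : 1 <= e -> slope e e <= 156 * e ^ 13.
Proof.
  intros He.
  assert (E : slope e e = e + 5 * e ^ 4 + 25 * e ^ 8 + 125 * e ^ 13)
    by (unfold slope; cbn [Nat.pow]; ring).
  assert (e ^ 1 <= e ^ 13) by (apply Nat.pow_le_mono_r; lia).
  assert (e ^ 4 <= e ^ 13) by (apply Nat.pow_le_mono_r; lia).
  assert (e ^ 8 <= e ^ 13) by (apply Nat.pow_le_mono_r; lia).
  rewrite Nat.pow_1_r in *. lia.
Qed.

Lemma grid_size_next_le d : 1 <= d -> 2 * S d * (S d * slope (S d) d + 1) <= (4 * d) ^ 15.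
Proof.
  intros Hd. set (e := S d).
  assert (Hs : slope e d <= 156 * e ^ 13)
    by (eapply Nat.le_trans; [apply (slope_le_mono e d e) | apply slope_diag_le]; lia).
  assert (e ^ 13 <> 0) by (apply Nat.pow_nonzero; lia).
  assert (2 * e * (e * slope e d + 1) <= 314 * e ^ 15).
  { replace (314 * e ^ 15) with (2 * e * (157 * (e * e ^ 13))) by (cbn [Nat.pow]; ring). nia. }
  assert (e ^ 15 <= (2 * d) ^ 15) by (apply Nat.pow_le_mono_l; lia).
  replace ((4 * d) ^ 15) with (2 ^ 15 * (2 * d) ^ 15)
    by (rewrite <- Nat.pow_mul_l; f_equal; lia).
  assert (314 <= 2 ^ 15)
    by (apply Nat.le_trans with (2 ^ 9); [simpl; lia | apply Nat.pow_le_mono_r; lia]).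
  nia.
Qed.

Lemma exists_grid_scale n : 2 <= n ->
  exists d, 1 <= d /\ 2 * d * (d * slope d (d - 1) + 1) <= n /\ n < (4 * d) ^ 15.
Proof.
  intros Hn.
  set (Q d := 2 * d * (d * slope d (d - 1) + 1) <=? n).
  destruct (bool_switch_point Q (n - 1)) as (d & Hd & Q1 & Q2).
  - apply Nat.leb_le. unfold slope. simpl. lia.
  - apply Nat.leb_gt. replace (S (n - 1)) with n by lia. nia.
  - apply Nat.leb_le in Q1. apply Nat.leb_gt in Q2.
    replace (S d - 1) with d in Q2 by lia.
    exists d. repeat split; try assumption.
    eapply Nat.lt_le_trans; [exact Q2 | apply grid_size_next_le; assumption].
Qed.

Open Scope R_scope.

Lemma incidence_power_bound n d I : (0 < n)%nat -> (n < (4 * d) ^ 15)%nat ->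
  (d * n <= 4 * I)%nat -> 1 / 16 * Rpower (INR n) (1 + 1 / 15) <= INR I.
Proof.
  intros Hn Hd HI.
  assert (npos : 0 < INR n) by (apply lt_0_INR; lia).
  set (z := Rpower (INR n) (1 / 15)).
  assert (zpos : 0 < z) by apply exp_pos.
  assert (z15 : z ^ 15 = INR n).
  { unfold z. rewrite <- Rpower_pow, Rpower_mult by apply exp_pos.
    replace (1 / 15 * INR 15) with 1 by (simpl; field). apply Rpower_1; assumption. }
  assert (zd : z < 4 * INR d).
  { apply lt_INR in Hd. rewrite pow_INR, mult_INR in Hd.
    replace (INR 4) with 4 in Hd by (simpl; ring).
    destruct (Rlt_or_le z (4 * INR d)) as [h|h]; [assumption|].
    pose proof (pos_INR d).
    pose proof (pow_incr _ _ 15 (conj (ltac:(lra) : 0 <= 4 * INR d) h)). lra. }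
  rewrite Rpower_plus, Rpower_1 by assumption. fold z.
  apply le_INR in HI. rewrite !mult_INR in HI. simpl (INR 4) in HI.
  assert (INR n * z <= INR n * (4 * INR d)) by (apply Rmult_le_compat_l; lra).
  nra.
Qed.

Theorem theorem1p3 :
  exists c : R, 0 < c /\
    forall n : nat, (1 < n)%nat ->
      exists (P : nat -> point) (L : nat -> line),
        (forall i j, (i < n)%nat -> (j < n)%nat -> P i = P j -> i = j) /\
        (forall j, (j < n)%nat -> is_line (L j)) /\
        (forall i j, (i < n)%nat -> (j < n)%nat -> same_line (L i) (L j) -> i = j) /\
        C10_free (inc_adj n P L) /\
        c * Rpower (INR n) (1 + 1 / 15) <= INR (num_incidences n P L).
Proof.
  exists (1 / 16). split; [lra|]. intros n Hn.
  destruct (exists_grid_scale n Hn) as (d & Hd & Hfit & Hn15).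
  set (W := (n / (2 * d))%nat).
  assert (HW : (d * slope d (d - 1) + 1 <= W)%nat) by (apply Nat.div_le_lower_bound; lia).
  assert (HnW : (2 * d * W <= n < 2 * d * W + 2 * d)%nat).
  { pose proof (Nat.div_mod_eq n (2 * d)). pose proof (Nat.mod_upper_bound n (2 * d)). lia. }
  exists (grid_point d W), (grid_line d W). repeat split.
  - intros i j _ _. apply grid_point_inj.
  - intros j _. apply grid_line_is_line.
  - intros i j _ _. apply grid_line_inj.
  - apply grid_C10_free.
  - apply (incidence_power_bound n d); [lia | assumption |].
    pose proof (grid_incidences_ge d W n ltac:(lia) ltac:(lia)). nia.
Qed.
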